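(* Let $d$ be a positive integer, $M\subseteq\mathbb Z_{>0}$ a finite set, and $Q$ a non-empty finite set of primes such that the elements of $M\cup Q$ are pairwise coprime, $M\cap Q=\emptyset$, and $\min(Q)>d$. Let $b_m\in\mathbb Z$ for $m\in M$ and $c_{q,i}\in\mathbb Z$ for $q\in Q$, $1\le i\le d$. Consider the system $\mathcal S$ of simultaneous congruences and non-congruences in the unknown $x$: $x\equiv b_m \pmod m$ for all $m\in M$, and $x\not\equiv c_{q,i}\pmod q$ for all $q\in Q$ and $1\le i\le d$. Then for every $k\in\mathbb Z$, $\mathcal S$ has a solution in the interval $\{k,k+1,\dots,k+\prod M\cdot E(Q,d)\}$, where $$E(Q,d)=\big((d+1)\cdot|Q|\big)^{4(d+1)^2(3+\ln\ln(|Q|+1))}.$$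
   Context: $\prod M$ denotes the product of all elements of $M$ (equal to $1$ if $M=\emptyset$); $|Q|$ is the cardinality of $Q$. *)

From Stdlib Require Import ZArith Znumtheory Reals List.
Open Scope R_scope.

Definition prodZ (M : list Z) : Z := fold_right Z.mul 1%Z M.

Definition E_bound (cardQ d : nat) : R :=
  Rpower (INR ((d + 1) * cardQ))
         (4 * (INR (d + 1)) ^ 2 * (3 + ln (ln (INR cardQ + 1)))).

From Stdlib Require Import ZArith Znumtheory Reals List Lia Lra Psatz Bool.

(* Let [P = prod M] and let [x1] solve the congruences (Chinese remainder
   theorem); every solution has the form [x1 + P t].  Since [P] is invertible
   modulo each [q], the non-congruences exclude at most [d] residues of [t]
   modulo [q].  Inclusion-exclusion truncated at an even level [L] bounds the
   number of admissible [t] in [[0, N)] from below (Bonferroni); by periodicity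
   and the Chinese remainder theorem its error is at most [((d+1) |Q|)^L],
   independently of [N], while its main term is at least [N exp (-K) / 2] with
   [K = (d+1) d sum_q 1/q].  Chebyshev's bound [binom (2Y) Y <= 4^Y], applied
   to dyadic blocks of [Q], gives [sum_q 1/q <= 6 + 2 ln ln (|Q|+1)], and the
   resulting window length is at most [E(Q,d)]. *)

Open Scope R_scope.

(** * Sums over integer windows and periodic functions *)

Fixpoint sumN (f : nat -> R) (n : nat) : R :=
  match n with O => 0 | S n => sumN f n + f n end.

Lemma sumN_ext f g n : (forall i, (i < n)%nat -> f i = g i) -> sumN f n = sumN g n.
Proof.
  induction n as [|n IH]; simpl; intros H; auto.
  rewrite IH by (intros; apply H; lia). now rewrite H by lia.
Qed.

Lemma sumN_plus f g n : sumN (fun i => f i + g i) n = sumN f n + sumN g n.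
Proof. induction n; simpl; lra. Qed.

Lemma sumN_minus f g n : sumN (fun i => f i - g i) n = sumN f n - sumN g n.
Proof. induction n; simpl; lra. Qed.

Lemma sumN_scal c f n : sumN (fun i => c * f i) n = c * sumN f n.
Proof. induction n as [|n IH]; simpl; [|rewrite IH]; lra. Qed.

Lemma sumN_const c n : sumN (fun _ => c) n = INR n * c.
Proof. induction n as [|n IH]; simpl sumN; [simpl|rewrite IH, S_INR]; lra. Qed.

Lemma sumN_le f g n : (forall i, (i < n)%nat -> f i <= g i) -> sumN f n <= sumN g n.
Proof.
  induction n as [|n IH]; simpl; intros H; [lra|].
  pose proof (H n ltac:(lia)). pose proof (IH ltac:(intros; apply H; lia)). lra.
Qed.

Lemma sumN_nonneg f n : (forall i, (i < n)%nat -> 0 <= f i) -> 0 <= sumN f n.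
Proof.
  intros H. replace 0 with (sumN (fun _ => 0) n) by (rewrite sumN_const; lra).
  now apply sumN_le.
Qed.

Lemma sumN_add f a b : sumN f (a + b) = sumN f a + sumN (fun i => f (a + i)%nat) b.
Proof.
  induction b as [|b IH]; simpl; [rewrite Nat.add_0_r; lra|].
  rewrite Nat.add_succ_r; simpl; rewrite IH; lra.
Qed.

Lemma sumN_swap (h : nat -> nat -> R) A B :
  sumN (fun j => sumN (fun s => h j s) B) A = sumN (fun s => sumN (fun j => h j s) A) B.
Proof.
  induction A as [|A IH]; simpl; [rewrite sumN_const; lra|].
  now rewrite IH, <- sumN_plus.
Qed.

Lemma sumN_le_len f a b : (a <= b)%nat -> (forall i, 0 <= f i) -> sumN f a <= sumN f b.
Proof.
  intros Hab H. replace b with (a + (b - a))%nat by lia. rewrite sumN_add.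
  pose proof (sumN_nonneg (fun i => f (a + i)%nat) (b - a) ltac:(intros; apply H)). lra.
Qed.

Definition window_sum (f : Z -> R) (t0 : Z) (N : nat) : R :=
  sumN (fun j => f (t0 + Z.of_nat j)%Z) N.

Lemma window_sum_S f t0 N : window_sum f t0 (S N) = window_sum f t0 N + f (t0 + Z.of_nat N)%Z.
Proof. reflexivity. Qed.

Lemma window_sum_add f t0 a b :
  window_sum f t0 (a + b) = window_sum f t0 a + window_sum f (t0 + Z.of_nat a)%Z b.
Proof.
  unfold window_sum. rewrite sumN_add. f_equal.
  apply sumN_ext. intros. f_equal. lia.
Qed.

Lemma window_sum_S_l f t0 N : window_sum f t0 (S N) = f t0 + window_sum f (t0 + 1)%Z N.
Proof.
  change (S N) with (1 + N)%nat. rewrite window_sum_add.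
  unfold window_sum at 1; simpl. now rewrite Z.add_0_r, Rplus_0_l.
Qed.

Lemma window_sum_ext f g t0 N : (forall t, f t = g t) -> window_sum f t0 N = window_sum g t0 N.
Proof. intros H. apply sumN_ext. auto. Qed.

Lemma window_sum_nonneg f t0 N : (forall t, 0 <= f t) -> 0 <= window_sum f t0 N.
Proof. intros H. apply sumN_nonneg. auto. Qed.

Lemma window_sum_blocks h t0 (T j : nat) :
  window_sum h t0 (j * T) = sumN (fun i => window_sum h (t0 + Z.of_nat i * Z.of_nat T)%Z T) j.
Proof.
  induction j as [|j IH]; [reflexivity|].
  replace (S j * T)%nat with (j * T + T)%nat by lia.
  rewrite window_sum_add, IH. simpl sumN. do 2 f_equal. lia.
Qed.

Definition periodic (f : Z -> R) (T : Z) := forall t, f (t + T)%Z = f t.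

Lemma periodic_shift f T : periodic f T -> forall k t, f (t + k * T)%Z = f t.
Proof.
  intros H.
  assert (Hn : forall (n : nat) t, f (t + Z.of_nat n * T)%Z = f t).
  { induction n as [|n IH]; intros t; [now rewrite Z.add_0_r|].
    rewrite <- (IH t), <- (H (t + Z.of_nat n * T)%Z). f_equal. lia. }
  intros k t. destruct (Z_le_gt_dec 0 k).
  - replace k with (Z.of_nat (Z.to_nat k)) by lia. apply Hn.
  - rewrite <- (Hn (Z.to_nat (- k)) (t + k * T)%Z). f_equal. lia.
Qed.

Lemma periodic_multiple f T k : periodic f T -> periodic f (k * T).
Proof. intros H t. now apply periodic_shift. Qed.

Lemma periodic_1_const f : periodic f 1 -> forall s, f s = f 0%Z.
Proof. intros H s. rewrite <- (periodic_shift f 1 H s 0). f_equal. lia. Qed.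

Lemma window_sum_period_invariant f (T : nat) :
  periodic f (Z.of_nat T) -> forall t0, window_sum f t0 T = window_sum f 0 T.
Proof.
  intros H.
  assert (Hs : forall t, window_sum f (t + 1)%Z T = window_sum f t T).
  { intros t. pose proof (window_sum_S f t T). pose proof (window_sum_S_l f t T).
    rewrite H in *. lra. }
  assert (Hn : forall (n : nat) t, window_sum f (t + Z.of_nat n)%Z T = window_sum f t T).
  { induction n as [|n IH]; intros t; [now rewrite Z.add_0_r|].
    rewrite <- (IH t), <- (Hs (t + Z.of_nat n)%Z). f_equal. lia. }
  intros t0. destruct (Z_le_gt_dec 0 t0).
  - rewrite <- (Hn (Z.to_nat t0) 0%Z). f_equal. lia.
  - rewrite <- (Hn (Z.to_nat (- t0)) t0). f_equal. lia.
Qed.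

Lemma window_sum_periods f (T : nat) : periodic f (Z.of_nat T) ->
  forall t0 a, window_sum f t0 (a * T) = INR a * window_sum f 0 T.
Proof.
  intros Hper t0 a. induction a as [|a IH]; [unfold window_sum; simpl; lra|].
  replace (S a * T)%nat with (a * T + T)%nat by lia.
  rewrite window_sum_add, IH, (window_sum_period_invariant f T Hper (t0 + _)), S_INR. lra.
Qed.

Lemma window_sum_periodic_approx f (T : nat) : (0 < T)%nat -> periodic f (Z.of_nat T) ->
  (forall t, 0 <= f t) -> forall t0 N,
  Rabs (window_sum f t0 N - INR N * window_sum f 0 T / INR T) <= window_sum f 0 T.
Proof.
  intros HT Hper Hnn t0 N.
  set (r := window_sum f 0 T).
  assert (Hr : 0 <= r) by (apply window_sum_nonneg; auto).
  pose proof (Nat.div_mod N T ltac:(lia)) as Hdm.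
  set (a := (N / T)%nat) in *. set (b := (N mod T)%nat) in *.
  assert (Hb : (b < T)%nat) by (apply Nat.mod_upper_bound; lia).
  rewrite Hdm, Nat.mul_comm, window_sum_add, window_sum_periods by auto. fold r.
  set (s := window_sum f (t0 + Z.of_nat (a * T))%Z b).
  assert (Hs0 : 0 <= s) by (apply window_sum_nonneg; auto).
  assert (Hs1 : s <= r).
  { unfold s, r. rewrite <- (window_sum_period_invariant f T Hper (t0 + Z.of_nat (a * T))%Z).
    apply sumN_le_len; [lia|auto]. }
  assert (HTp : 0 < INR T) by (apply lt_0_INR; lia).
  assert (HbT : INR b <= INR T) by (apply le_INR; lia).
  rewrite plus_INR, mult_INR.
  replace ((INR a * INR T + INR b) * r / INR T) with (INR a * r + INR b * r / INR T)
    by (field; lra).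
  assert (Hbr : 0 <= INR b * r / INR T <= r).
  { split.
    - unfold Rdiv. apply Rmult_le_pos; [apply Rmult_le_pos; [apply pos_INR|lra]|].
      left; apply Rinv_0_lt_compat; lra.
    - apply Rmult_le_reg_r with (INR T); auto. unfold Rdiv.
      rewrite Rmult_assoc, Rinv_l by lra. nra. }
  apply Rabs_le. lra.
Qed.

(* Averaging over a period of [g] shows the sum below does not depend on
   [s], and it is invariant under [s -> s + T] and [s -> s + q], hence constant. *)
Lemma sumN_progression_coprime g (T q : nat) : (0 < q)%nat ->
  periodic g (Z.of_nat q) -> Z.gcd (Z.of_nat T) (Z.of_nat q) = 1%Z ->
  forall s, sumN (fun j => g (s + Z.of_nat j * Z.of_nat T)%Z) q = window_sum g 0 q.
Proof.
  intros Hq Hg Hgcd.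
  set (F := fun s => sumN (fun j => g (s + Z.of_nat j * Z.of_nat T)%Z) q).
  assert (FT : periodic F (Z.of_nat T)).
  { intros s. set (h := fun j : Z => g (s + j * Z.of_nat T)%Z).
    assert (hper : periodic h (Z.of_nat q)).
    { intros j. unfold h.
      replace (s + (j + Z.of_nat q) * Z.of_nat T)%Z
        with (s + j * Z.of_nat T + Z.of_nat T * Z.of_nat q)%Z by ring.
      apply (periodic_shift g _ Hg). }
    transitivity (window_sum h 1 q).
    { apply sumN_ext. intros. unfold h. f_equal. lia. }
    rewrite window_sum_period_invariant by auto. apply sumN_ext. reflexivity. }
  assert (Fq : periodic F (Z.of_nat q)).
  { intros s. apply sumN_ext. intros.
    replace (s + Z.of_nat q + Z.of_nat i * Z.of_nat T)%Z
      with (s + Z.of_nat i * Z.of_nat T + Z.of_nat q)%Z by ring. apply Hg. }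
  assert (F1 : periodic F 1).
  { assert (Hg1 : Zis_gcd (Z.of_nat T) (Z.of_nat q) 1) by (rewrite <- Hgcd; apply Zgcd_is_gcd).
    intros s. destruct (Zis_gcd_bezout _ _ _ Hg1) as [u v Huv].
    replace (s + 1)%Z with (s + u * Z.of_nat T + v * Z.of_nat q)%Z by lia.
    rewrite (periodic_shift F _ Fq v). apply (periodic_shift F _ FT u). }
  intros s. change (F s = window_sum g 0 q). rewrite (periodic_1_const F F1 s).
  assert (Hsum : sumN (fun s => F (Z.of_nat s)) q = INR q * F 0%Z).
  { rewrite <- sumN_const. apply sumN_ext. intros. now apply periodic_1_const. }
  unfold F at 1 in Hsum. rewrite <- sumN_swap in Hsum.
  assert (Hq' : sumN (fun j => sumN (fun s => g (Z.of_nat s + Z.of_nat j * Z.of_nat T)%Z) q) q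
                = INR q * window_sum g 0 q).
  { rewrite <- sumN_const. apply sumN_ext. intros j _.
    rewrite <- (window_sum_period_invariant g q Hg (Z.of_nat j * Z.of_nat T)).
    apply sumN_ext. intros. f_equal. lia. }
  rewrite Hq' in Hsum. assert (0 < INR q) by (apply lt_0_INR; lia). nra.
Qed.

Lemma window_sum_mul_coprime f g (T q : nat) : (0 < q)%nat ->
  periodic f (Z.of_nat T) -> periodic g (Z.of_nat q) -> Z.gcd (Z.of_nat T) (Z.of_nat q) = 1%Z ->
  window_sum (fun t => f t * g t) 0 (T * q) = window_sum f 0 T * window_sum g 0 q.
Proof.
  intros Hq Hf Hg Hgcd.
  rewrite Nat.mul_comm, window_sum_blocks.
  transitivity (sumN (fun j => sumN (fun s =>
     f (Z.of_nat s) * g (Z.of_nat s + Z.of_nat j * Z.of_nat T)%Z) T) q).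
  { apply sumN_ext. intros j _. apply sumN_ext. intros s _.
    replace (0 + Z.of_nat j * Z.of_nat T + Z.of_nat s)%Z
      with (Z.of_nat s + Z.of_nat j * Z.of_nat T)%Z by ring.
    f_equal. apply (periodic_shift f _ Hf). }
  rewrite sumN_swap, Rmult_comm. unfold window_sum at 2. rewrite <- sumN_scal.
  apply sumN_ext. intros s _. rewrite sumN_scal, Rmult_comm.
  now rewrite sumN_progression_coprime, Z.add_0_l.
Qed.
(** * A Brun-type sieve *)

Definition ind (b : bool) : R := if b then 1 else 0.

Lemma ind_01 b : 0 <= ind b <= 1.
Proof. destruct b; simpl; lra. Qed.

Fixpoint lsum (Q : list Z) (a : Z -> R) : R :=
  match Q with nil => 0 | q :: Q' => a q + lsum Q' a end.

Fixpoint prod_compl (Q : list Z) (a : Z -> R) : R :=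
  match Q with nil => 1 | q :: Q' => (1 - a q) * prod_compl Q' a end.

(* [esym Q a L] is the elementary symmetric polynomial [e_L] in the [a q], [q] in [Q]. *)
Fixpoint esym (Q : list Z) (a : Z -> R) (L : nat) : R :=
  match Q with
  | nil => match L with O => 1 | S _ => 0 end
  | q :: Q' => match L with O => 1 | S L' => esym Q' a L + a q * esym Q' a L' end
  end.

(* [incl_excl Q a L] is [sum_(k < L) (-1)^k e_k], the inclusion-exclusion
   expansion of [prod_compl Q a] truncated at level [L]. *)
Fixpoint incl_excl (Q : list Z) (a : Z -> R) (L : nat) : R :=
  match Q with
  | nil => match L with O => 0 | S _ => 1 end
  | q :: Q' => match L with O => 0 | S L' => incl_excl Q' a L - a q * incl_excl Q' a L' end
  end.

Lemma lsum_nonneg Q a : (forall q, In q Q -> 0 <= a q) -> 0 <= lsum Q a.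
Proof.
  induction Q as [|q Q IH]; simpl; intros H; [lra|].
  pose proof (IH ltac:(intros; apply H; simpl; auto)). pose proof (H q (or_introl eq_refl)). lra.
Qed.

Lemma lsum_le Q f g : (forall q, In q Q -> f q <= g q) -> lsum Q f <= lsum Q g.
Proof.
  induction Q as [|q Q IH]; simpl; intros H; [lra|].
  pose proof (H q (or_introl eq_refl)). pose proof (IH ltac:(intros; apply H; simpl; auto)). lra.
Qed.

Lemma lsum_le_length Q f c : (forall q, In q Q -> f q <= c) -> lsum Q f <= INR (length Q) * c.
Proof.
  induction Q as [|q Q IH]; intros H; simpl lsum; [simpl; lra|].
  change (length (q :: Q)) with (S (length Q)). rewrite S_INR.
  pose proof (H q (or_introl eq_refl)). pose proof (IH ltac:(intros; apply H; simpl; auto)). lra.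
Qed.

Lemma lsum_ext_in Q f g : (forall q, In q Q -> f q = g q) -> lsum Q f = lsum Q g.
Proof.
  induction Q as [|q Q IH]; intros H; simpl; auto.
  rewrite (H q (or_introl eq_refl)), IH; auto. intros; apply H; simpl; auto.
Qed.

Lemma lsum_plus Q f g : lsum Q (fun q => f q + g q) = lsum Q f + lsum Q g.
Proof. induction Q; simpl; lra. Qed.

Lemma lsum_scal Q (f : Z -> R) c : lsum Q (fun q => c * f q) = c * lsum Q f.
Proof. induction Q as [|q Q IH]; simpl; [|rewrite IH]; lra. Qed.

Lemma lsum_sumN Q (h : nat -> Z -> R) J :
  lsum Q (fun q => sumN (fun j => h j q) J) = sumN (fun j => lsum Q (h j)) J.
Proof. induction Q as [|q Q IH]; simpl; [rewrite sumN_const; lra|]. now rewrite IH, <- sumN_plus. Qed.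

Lemma lsum_filter Q (p : Z -> bool) f :
  lsum Q (fun q => if p q then f q else 0) = lsum (filter p Q) f.
Proof. induction Q as [|q Q IH]; simpl; auto. destruct (p q); simpl; rewrite IH; lra. Qed.

Lemma prod_compl_01 Q a : (forall q, In q Q -> 0 <= a q <= 1) -> 0 <= prod_compl Q a <= 1.
Proof.
  induction Q as [|q Q IH]; simpl; intros H; [lra|].
  pose proof (IH ltac:(intros; apply H; simpl; auto)). pose proof (H q (or_introl eq_refl)). nra.
Qed.

Lemma incl_excl_bounds Q a : (forall q, In q Q -> 0 <= a q <= 1) -> forall L,
  if Nat.even L then prod_compl Q a - esym Q a L <= incl_excl Q a L <= prod_compl Q a
  else prod_compl Q a <= incl_excl Q a L <= prod_compl Q a + esym Q a L.
Proof.
  induction Q as [|q Q IH]; intros H L.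
  - destruct L as [|L]; simpl; [lra|].
    change (if Nat.even (S L) then 1 - 0 <= 1 <= 1 else 1 <= 1 <= 1 + 0).
    destruct (Nat.even (S L)); lra.
  - assert (H' : forall q', In q' Q -> 0 <= a q' <= 1) by (intros; apply H; simpl; auto).
    pose proof (H q (or_introl eq_refl)). pose proof (prod_compl_01 Q a H').
    destruct L as [|L]; [simpl; nra|].
    pose proof (IH H' (S L)) as I1. pose proof (IH H' L) as I2.
    rewrite Nat.even_succ, <- Nat.negb_even in *.
    simpl incl_excl; simpl esym; simpl prod_compl.
    destruct (Nat.even L); simpl in *; nra.
Qed.

Lemma pow_add_succ_ge x y m : 0 <= x -> 0 <= y ->
  x ^ S m + INR (S m) * y * x ^ m <= (x + y) ^ S m.
Proof.
  intros Hx Hy. induction m as [|m IH]; [simpl; lra|].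
  change ((x + y) ^ S (S m)) with ((x + y) * (x + y) ^ S m).
  change (x ^ S (S m)) with (x * x ^ S m). change (x ^ S m) with (x * x ^ m) in *.
  assert (0 <= x ^ m) by (apply pow_le; auto). pose proof (pos_INR m).
  rewrite !S_INR in *. set (P := x ^ m) in *.
  assert (0 <= (INR m + 1) * (y * y * P)) by (apply Rmult_le_pos; [lra|apply Rmult_le_pos; nra]).
  apply Rle_trans with ((x + y) * (x * P + (INR m + 1) * y * P)); [|apply Rmult_le_compat_l; lra].
  nra.
Qed.

Lemma pow_add_succ_ge_1 x y m : 1 <= x -> 0 <= y -> x ^ S m + y * x ^ m <= (x + y) ^ S m.
Proof.
  intros Hx Hy. pose proof (pow_add_succ_ge x y m ltac:(lra) Hy).
  assert (0 <= y * x ^ m) by (apply Rmult_le_pos; [|apply pow_le]; lra).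
  rewrite S_INR in H. pose proof (pos_INR m). nra.
Qed.

Lemma esym_le Q a L : (forall q, In q Q -> 0 <= a q) -> esym Q a L <= lsum Q a ^ L / INR (fact L).
Proof.
  revert L; induction Q as [|q Q IH]; intros L H.
  - destruct L; simpl; unfold Rdiv; lra.
  - assert (H' : forall q', In q' Q -> 0 <= a q') by (intros; apply H; simpl; auto).
    pose proof (H q (or_introl eq_refl)) as Hq.
    destruct L as [|L]; [simpl; lra|]. simpl esym. simpl lsum.
    pose proof (IH (S L) H') as I1. pose proof (IH L H') as I2.
    pose proof (pow_add_succ_ge (lsum Q a) (a q) L (lsum_nonneg Q a H') Hq) as Hb.
    assert (0 < INR (fact L)) by (apply lt_0_INR, lt_O_fact).
    assert (0 < INR (S L)) by (apply lt_0_INR; lia).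
    apply Rle_trans with (lsum Q a ^ S L / INR (fact (S L)) + a q * (lsum Q a ^ L / INR (fact L))).
    { apply Rplus_le_compat; auto. apply Rmult_le_compat_l; auto. }
    rewrite fact_simpl, mult_INR. unfold Rdiv.
    apply Rmult_le_reg_r with (INR (S L) * INR (fact L)); [nra|].
    rewrite Rmult_plus_distr_r, (Rplus_comm (a q)).
    replace (lsum Q a ^ S L * / (INR (S L) * INR (fact L)) * (INR (S L) * INR (fact L)))
      with (lsum Q a ^ S L) by (field; lra).
    replace (a q * (lsum Q a ^ L * / INR (fact L)) * (INR (S L) * INR (fact L)))
      with (INR (S L) * a q * lsum Q a ^ L) by (field; lra).
    replace ((lsum Q a + a q) ^ S L * / (INR (S L) * INR (fact L)) * (INR (S L) * INR (fact L)))
      with ((lsum Q a + a q) ^ S L) by (field; lra).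
    lra.
Qed.

Lemma prod_compl_ge_exp Q a (c : Z -> R) :
  (forall q, In q Q -> exp (- c q) <= 1 - a q /\ a q <= 1) -> exp (- lsum Q c) <= prod_compl Q a.
Proof.
  induction Q as [|q Q IH]; intros H; simpl; [rewrite Ropp_0, exp_0; lra|].
  destruct (H q (or_introl eq_refl)) as [H1 H2].
  pose proof (IH ltac:(intros; apply H; simpl; auto)).
  rewrite Ropp_plus_distr, exp_plus. apply Rmult_le_compat; auto; left; apply exp_pos.
Qed.

Definition pairwise_coprime (Q : list Z) :=
  NoDup Q /\ forall x y, In x Q -> In y Q -> x <> y -> Z.gcd x y = 1%Z.

Lemma pairwise_coprime_tail q Q : pairwise_coprime (q :: Q) -> pairwise_coprime Q.
Proof. intros [H1 H2]. inversion H1; subst. split; auto. intros; apply H2; simpl; auto. Qed.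

Lemma gcd_mul_1 a b c : Z.gcd a c = 1%Z -> Z.gcd b c = 1%Z -> Z.gcd (a * b) c = 1%Z.
Proof.
  intros H1 H2. apply Zgcd_1_rel_prime, rel_prime_sym, rel_prime_mult;
    apply rel_prime_sym, Zgcd_1_rel_prime; auto.
Qed.

Section Sieve.

(* [bad q t] says that [t] lies in a residue class excluded modulo [q]. *)
Variable bad : Z -> Z -> bool.

Definition bad_at (t : Z) (q : Z) : R := ind (bad q t).

Definition bad_count (q : Z) : R := window_sum (fun t => ind (bad q t)) 0 (Z.to_nat q).

Definition bad_density (q : Z) : R := bad_count q / IZR q.

Lemma prod_compl_bad_at Q t :
  prod_compl Q (bad_at t) = ind (forallb (fun q => negb (bad q t)) Q).
Proof.
  induction Q as [|q Q IH]; simpl; auto. rewrite IH. unfold bad_at.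
  destruct (bad q t), forallb; simpl; lra.
Qed.

Lemma bad_weight_periodic f (T : nat) q : (0 < q)%Z ->
  periodic f (Z.of_nat T) -> periodic (fun t => ind (bad q t)) q ->
  periodic (fun t => f t * ind (bad q t)) (Z.of_nat (T * Z.to_nat q)).
Proof.
  intros Hq Hf Hbad t. rewrite Nat2Z.inj_mul, Z2Nat.id by lia. f_equal.
  - rewrite Z.mul_comm. now apply periodic_multiple.
  - now apply (periodic_multiple (fun t => ind (bad q t))).
Qed.

Lemma bad_weight_window_sum f (T : nat) q : (0 < q)%Z ->
  periodic f (Z.of_nat T) -> periodic (fun t => ind (bad q t)) q -> Z.gcd (Z.of_nat T) q = 1%Z ->
  window_sum (fun t => f t * ind (bad q t)) 0 (T * Z.to_nat q) = window_sum f 0 T * bad_count q.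
Proof.
  intros Hq Hf Hbad Hgcd. apply window_sum_mul_coprime; [lia|auto|rewrite Z2Nat.id by lia..]; auto.
Qed.

(* Induction on [Q]: the recursion of [incl_excl] splits off the sieve by the
   rest of [Q] with the weight [f] restricted to [bad q], which is periodic
   modulo [T q] and has total mass [bad_count q] times that of [f]. *)
Lemma sieve_error Q :
  (forall q, In q Q -> (0 < q)%Z /\ periodic (fun t => ind (bad q t)) q) ->
  pairwise_coprime Q ->
  forall L f (T : nat), (0 < T)%nat -> periodic f (Z.of_nat T) -> (forall t, 0 <= f t) ->
  (forall q, In q Q -> Z.gcd (Z.of_nat T) q = 1%Z) ->
  forall t0 N,
  Rabs (window_sum (fun t => f t * incl_excl Q (bad_at t) L) t0 N
        - INR N * (window_sum f 0 T / INR T) * incl_excl Q bad_density L)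
  <= window_sum f 0 T * (1 + lsum Q bad_count) ^ L.
Proof.
  induction Q as [|q Q IH]; intros HQ Hpc L f T HT Hper Hnn Hgcd t0 N;
    (destruct L as [|L];
     [rewrite (window_sum_ext _ (fun _ => 0)) by (intros; simpl; lra);
      unfold window_sum at 1; simpl incl_excl;
      rewrite sumN_const, !Rmult_0_r, Rminus_0_r, Rabs_R0, Rmult_1_r;
      apply window_sum_nonneg; auto|]).
  - simpl. rewrite (window_sum_ext _ f) by (intros; lra). rewrite Rplus_0_r, pow1, !Rmult_1_r.
    replace (INR N * (window_sum f 0 T / INR T)) with (INR N * window_sum f 0 T / INR T)
      by (unfold Rdiv; ring).
    now apply window_sum_periodic_approx.
  - destruct (HQ q (or_introl eq_refl)) as [Hq0 Hqper].
    assert (HQ' : forall q', In q' Q -> (0 < q')%Z /\ periodic (fun t => ind (bad q' t)) q')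
      by (intros; apply HQ; simpl; auto).
    pose proof (pairwise_coprime_tail _ _ Hpc) as Hpc'.
    assert (Hgcd' : forall q', In q' Q -> Z.gcd (Z.of_nat (T * Z.to_nat q)) q' = 1%Z).
    { intros q' Hq'. rewrite Nat2Z.inj_mul, Z2Nat.id by lia.
      apply gcd_mul_1; [apply Hgcd; simpl; auto|].
      destruct Hpc as [Hnd Hcop]. apply Hcop; simpl; auto. intros ->. inversion Hnd; auto. }
    pose proof (IH HQ' Hpc' (S L) f T HT Hper Hnn ltac:(intros; apply Hgcd; simpl; auto) t0 N) as E1.
    pose proof (IH HQ' Hpc' L (fun t => f t * ind (bad q t)) (T * Z.to_nat q)%nat ltac:(lia)
      (bad_weight_periodic f T q Hq0 Hper Hqper)
      ltac:(intros t; pose proof (ind_01 (bad q t)); pose proof (Hnn t); nra) Hgcd' t0 N) as E2.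
    rewrite bad_weight_window_sum, mult_INR, (INR_IZR_INZ (Z.to_nat q)), Z2Nat.id in E2
      by (auto; try lia; apply Hgcd; simpl; auto).
    assert (HTp : 0 < INR T) by (apply lt_0_INR; lia).
    assert (Hqp : 0 < IZR q) by (apply IZR_lt; lia).
    set (r := window_sum f 0 T) in *.
    assert (Hr : 0 <= r) by (apply window_sum_nonneg; auto).
    assert (Hrho : 0 <= bad_count q) by (apply window_sum_nonneg; intros; apply ind_01).
    assert (HS : 0 <= lsum Q bad_count)
      by (apply lsum_nonneg; intros q' _; apply window_sum_nonneg; intros; apply ind_01).
    simpl incl_excl. simpl lsum.
    replace (1 + (bad_count q + lsum Q bad_count)) with (1 + lsum Q bad_count + bad_count q) by ring.
    eapply Rle_trans; [|apply Rmult_le_compat_l;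
      [exact Hr|apply pow_add_succ_ge_1; [lra|exact Hrho]]].
    rewrite Rmult_plus_distr_l, <- Rmult_assoc.
    eapply Rle_trans; [|apply Rplus_le_compat; [exact E1|rewrite <- Rabs_Ropp in E2; exact E2]].
    eapply Rle_trans; [|apply Rabs_triang]. right. f_equal.
    assert (Hsplit : window_sum (fun t => f t * (incl_excl Q (bad_at t) (S L)
                        - bad_at t q * incl_excl Q (bad_at t) L)) t0 N
       = window_sum (fun t => f t * incl_excl Q (bad_at t) (S L)) t0 N
         - window_sum (fun t => f t * ind (bad q t) * incl_excl Q (bad_at t) L) t0 N).
    { unfold window_sum. rewrite <- sumN_minus. apply sumN_ext. intros. unfold bad_at. ring. }
    rewrite Hsplit. unfold bad_density. field. lra.
Qed.

Lemma sieve_error_unweighted Q :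
  (forall q, In q Q -> (0 < q)%Z /\ periodic (fun t => ind (bad q t)) q) ->
  pairwise_coprime Q -> forall L t0 N,
  Rabs (window_sum (fun t => incl_excl Q (bad_at t) L) t0 N - INR N * incl_excl Q bad_density L)
  <= (1 + lsum Q bad_count) ^ L.
Proof.
  intros HQ Hpc L t0 N.
  pose proof (sieve_error Q HQ Hpc L (fun _ => 1) 1 ltac:(lia) ltac:(intros t; reflexivity)
    ltac:(intros; lra) ltac:(intros; apply Z.gcd_1_l) t0 N) as Herr.
  replace (window_sum (fun _ => 1) 0 1) with 1 in Herr by (unfold window_sum; simpl; lra).
  rewrite (window_sum_ext _ (fun t => incl_excl Q (bad_at t) L)) in Herr by (intros; ring).
  change (INR 1) with 1 in Herr. now rewrite Rmult_1_l, Rdiv_1_r, Rmult_1_r in Herr.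
Qed.

Lemma window_sum_incl_excl_le_sifted Q L t0 N : Nat.even L = true ->
  window_sum (fun t => incl_excl Q (bad_at t) L) t0 N
  <= window_sum (fun t => ind (forallb (fun q => negb (bad q t)) Q)) t0 N.
Proof.
  intros Heven. apply sumN_le. intros i _.
  pose proof (incl_excl_bounds Q (bad_at (t0 + Z.of_nat i)%Z) ltac:(intros; apply ind_01) L) as Hb.
  rewrite Heven, prod_compl_bad_at in Hb. lra.
Qed.

End Sieve.
(** * Chebyshev's bound and the sum of reciprocals of primes *)

Fixpoint binom (n k : nat) : nat :=
  match n, k with
  | _, O => 1%nat
  | O, S _ => 0%nat
  | S n', S k' => (binom n' k' + binom n' (S k'))%nat
  end.

Lemma binom_0 n k : (n < k)%nat -> binom n k = 0%nat.
Proof. revert k; induction n; intros [|k] H; simpl; try lia. rewrite !IHn; lia. Qed.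

Lemma binom_le_pow n k : (binom n k <= 2 ^ n)%nat.
Proof.
  revert k; induction n as [|n IH]; intros [|k]; simpl binom; try (simpl; lia).
  - pose proof (Nat.pow_nonzero 2 (S n)). lia.
  - pose proof (IH k). pose proof (IH (S k)). rewrite Nat.pow_succ_r'. lia.
Qed.

Lemma binom_fact n k : (k <= n)%nat -> (binom n k * fact k * fact (n - k) = fact n)%nat.
Proof.
  revert k; induction n as [|n IH]; intros [|k] Hk.
  - simpl; lia.
  - lia.
  - simpl binom. rewrite Nat.sub_0_r. simpl fact at 1. lia.
  - simpl binom. replace (S n - S k)%nat with (n - k)%nat by lia.
    destruct (Nat.eq_dec k n) as [->|Hne].
    + rewrite (binom_0 n (S n)), Nat.sub_diag by lia.
      pose proof (IH n (le_n n)) as I. rewrite Nat.sub_diag in I.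
      simpl fact at 3. simpl fact at 1. nia.
    + pose proof (IH k ltac:(lia)) as I1. pose proof (IH (S k) ltac:(lia)) as I2.
      replace (n - k)%nat with (S (n - S k)) in * by lia.
      rewrite fact_simpl in I1. rewrite fact_simpl in I2. rewrite !fact_simpl.
      replace (S (n - S k)) with (n - k)%nat in * by lia.
      assert (Hm : (n - k + S k = S n)%nat) by lia.
      set (m := (n - k)%nat) in *. set (A := fact k) in *. set (B := fact (n - S k)) in *.
      rewrite <- Hm, Nat.mul_add_distr_r.
      transitivity (S k * (binom n k * A * (m * B)) + m * (binom n (S k) * (S k * A) * B))%nat;
        [ring|]. rewrite I1, I2. ring.
Qed.

Lemma divide_fact (p : Z) (n : nat) : (1 <= p <= Z.of_nat n)%Z -> (p | Z.of_nat (fact n))%Z.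
Proof.
  induction n as [|n IH]; intros H; [lia|].
  rewrite fact_simpl, Nat2Z.inj_mul.
  destruct (Z.eq_dec p (Z.of_nat (S n))) as [->|Hne].
  - apply Z.divide_mul_l, Z.divide_refl.
  - apply Z.divide_mul_r, IH. lia.
Qed.

Lemma prime_not_divide_fact (p : Z) (n : nat) :
  prime p -> (Z.of_nat n < p)%Z -> ~ (p | Z.of_nat (fact n))%Z.
Proof.
  intros Hp. induction n as [|n IH]; intros H Hd.
  - apply Z.divide_1_r in Hd. destruct Hp. lia.
  - rewrite fact_simpl, Nat2Z.inj_mul in Hd. apply prime_mult in Hd; auto.
    destruct Hd as [Hd|Hd]; [apply Z.divide_pos_le in Hd; lia|apply IH; auto; lia].
Qed.

Lemma prime_divides_central_binom (p : Z) (Y : nat) :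
  prime p -> (Z.of_nat Y < p <= 2 * Z.of_nat Y)%Z -> (p | Z.of_nat (binom (2 * Y) Y))%Z.
Proof.
  intros Hp H.
  pose proof (binom_fact (2 * Y) Y ltac:(lia)) as Hb.
  replace (2 * Y - Y)%nat with Y in Hb by lia.
  assert (Hd : (p | Z.of_nat (fact (2 * Y)))%Z) by (apply divide_fact; destruct Hp; lia).
  rewrite <- Hb, !Nat2Z.inj_mul in Hd.
  pose proof (prime_not_divide_fact p Y Hp ltac:(lia)).
  apply prime_mult in Hd; auto. destruct Hd as [Hd|]; [|tauto].
  apply prime_mult in Hd; auto. tauto.
Qed.

Lemma prodZ_pos M : (forall m, In m M -> (0 < m)%Z) -> (0 < prodZ M)%Z.
Proof.
  induction M as [|m M IH]; intros H; simpl; [lia|].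
  pose proof (H m (or_introl eq_refl)). pose proof (IH ltac:(intros; apply H; simpl; auto)). nia.
Qed.

Lemma prodZ_divide M m : In m M -> (m | prodZ M)%Z.
Proof.
  induction M as [|m' M IH]; intros H; simpl in *; [tauto|].
  destruct H as [<-|H]; [apply Z.divide_mul_l, Z.divide_refl|apply Z.divide_mul_r; auto].
Qed.

Lemma gcd_prodZ_1 q M : (forall m, In m M -> Z.gcd m q = 1%Z) -> Z.gcd (prodZ M) q = 1%Z.
Proof.
  induction M as [|m M IH]; intros H; simpl; [apply Z.gcd_1_l|].
  apply gcd_mul_1; [|apply IH]; intros; apply H; simpl; auto.
Qed.

Lemma prodZ_divide_coprime F n : pairwise_coprime F ->
  (forall x, In x F -> (x | n)%Z) -> (prodZ F | n)%Z.
Proof.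
  induction F as [|q F IH]; intros [Hnd Hpc] Hd; simpl; [apply Z.divide_1_l|].
  inversion Hnd; subst.
  destruct (Hd q (or_introl eq_refl)) as [k ->].
  assert (Hqk : (prodZ F | k)%Z).
  { apply Gauss with q.
    - rewrite Z.mul_comm. apply IH; [now apply pairwise_coprime_tail with q; split|].
      intros; apply Hd; simpl; auto.
    - apply Zgcd_1_rel_prime. apply gcd_prodZ_1. intros x Hx.
      apply Hpc; simpl; auto. intros ->. auto. }
  destruct Hqk as [m ->]. exists m. ring.
Qed.

Lemma pow_length_le_prodZ F Y : (0 <= Y)%Z -> (forall x, In x F -> Y + 1 <= x)%Z ->
  ((Y + 1) ^ Z.of_nat (length F) <= prodZ F)%Z.
Proof.
  induction F as [|q F IH]; intros HY H; [simpl; lia|].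
  change (prodZ (q :: F)) with (q * prodZ F)%Z. change (length (q :: F)) with (S (length F)).
  rewrite Nat2Z.inj_succ, Z.pow_succ_r by lia.
  pose proof (H q (or_introl eq_refl)). pose proof (IH HY ltac:(intros; apply H; simpl; auto)).
  assert (0 <= (Y + 1) ^ Z.of_nat (length F))%Z by (apply Z.pow_nonneg; lia). nia.
Qed.

(* The primes in [(Y, 2Y]] all divide [binom (2Y) Y <= 4^Y]. *)
Lemma primes_in_dyadic_interval F (Y : nat) : pairwise_coprime F ->
  (forall x, In x F -> prime x /\ (Z.of_nat Y < x <= 2 * Z.of_nat Y)%Z) ->
  ((Z.of_nat Y + 1) ^ Z.of_nat (length F) <= 2 ^ (2 * Z.of_nat Y))%Z.
Proof.
  intros Hpc HF.
  apply Z.le_trans with (prodZ F).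
  { apply pow_length_le_prodZ; [lia|]. intros x Hx. destruct (HF x Hx); lia. }
  apply Z.le_trans with (Z.of_nat (binom (2 * Y) Y)).
  { apply Z.divide_pos_le.
    - pose proof (binom_fact (2 * Y) Y ltac:(lia)) as Hb. pose proof (lt_O_fact (2 * Y)).
      assert (binom (2 * Y) Y <> 0%nat) by (intros Hz; rewrite Hz, !Nat.mul_0_l in Hb; lia). lia.
    - apply prodZ_divide_coprime; auto. intros x Hx. destruct (HF x Hx).
      now apply prime_divides_central_binom. }
  pose proof (binom_le_pow (2 * Y) Y) as H. apply Nat2Z.inj_le in H.
  now rewrite Nat2Z.inj_pow, Nat2Z.inj_mul in H.
Qed.

Definition recip_sum (Q : list Z) : R := lsum Q (fun q => / IZR q).

Definition in_dyadic (j : nat) (q : Z) : bool :=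
  (Z.of_nat (2 ^ j) <? q)%Z && (q <=? 2 * Z.of_nat (2 ^ j))%Z.

Definition above (J : nat) (q : Z) : bool := (Z.of_nat (2 ^ J) <? q)%Z.

Lemma recip_sum_dyadic_decomp Q J : (forall q, In q Q -> (2 <= q)%Z) ->
  recip_sum Q = sumN (fun j => recip_sum (filter (in_dyadic j) Q)) J + recip_sum (filter (above J) Q).
Proof.
  intros HQ. unfold recip_sum. rewrite <- lsum_filter.
  rewrite (sumN_ext _ (fun j => lsum Q (fun q => if in_dyadic j q then / IZR q else 0)))
    by (intros; now rewrite lsum_filter).
  rewrite <- lsum_sumN, <- lsum_plus.
  apply lsum_ext_in. intros q Hq. specialize (HQ q Hq). set (v := / IZR q).
  induction J as [|J IH]; simpl sumN.
  - unfold above. simpl. destruct (1 <? q)%Z eqn:E; [lra|]. apply Z.ltb_ge in E. lia.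
  - unfold above, in_dyadic in *. rewrite Nat.pow_succ_r', Nat2Z.inj_mul. simpl (Z.of_nat 2).
    destruct (Z.of_nat (2 ^ J) <? q)%Z eqn:E1, (q <=? 2 * Z.of_nat (2 ^ J))%Z eqn:E2,
      (2 * Z.of_nat (2 ^ J) <? q)%Z eqn:E3; cbn [andb] in *;
      try apply Z.ltb_lt in E1; try apply Z.ltb_ge in E1;
      try apply Z.leb_le in E2; try apply Z.leb_gt in E2;
      try apply Z.ltb_lt in E3; try apply Z.ltb_ge in E3; try lia; lra.
Qed.

Lemma recip_sum_above_le Q J : (forall q, In q Q -> above J q = true -> (0 < q)%Z) ->
  recip_sum (filter (above J) Q) <= INR (length (filter (above J) Q)) / (INR (2 ^ J) + 1).
Proof.
  intros HQ. unfold recip_sum, Rdiv. apply lsum_le_length. intros q Hq.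
  apply filter_In in Hq. destruct Hq as [_ Hq]. unfold above in Hq. apply Z.ltb_lt in Hq.
  assert (Hle : IZR (Z.of_nat (2 ^ J)) + 1 <= IZR q) by (rewrite <- plus_IZR; apply IZR_le; lia).
  rewrite <- INR_IZR_INZ in Hle. pose proof (pos_INR (2 ^ J)).
  apply Rinv_le_contravar; lra.
Qed.

Lemma recip_sum_dyadic_le Q j : pairwise_coprime Q -> (forall q, In q Q -> prime q) ->
  recip_sum (filter (in_dyadic j) Q) <= INR (length (filter (in_dyadic j) Q)) / (INR (2 ^ j) + 1)
  /\ ((Z.of_nat (2 ^ j) + 1) ^ Z.of_nat (length (filter (in_dyadic j) Q)) <= 2 ^ (2 * Z.of_nat (2 ^ j)))%Z.
Proof.
  intros [Hnd Hpc] Hpr. set (F := filter (in_dyadic j) Q).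
  assert (HF : forall x, In x F -> prime x /\ (Z.of_nat (2 ^ j) < x <= 2 * Z.of_nat (2 ^ j))%Z).
  { intros x Hx. apply filter_In in Hx. destruct Hx as [Hx Hb]. unfold in_dyadic in Hb.
    apply andb_prop in Hb. rewrite Z.ltb_lt, Z.leb_le in Hb. auto. }
  split.
  - unfold recip_sum, Rdiv. apply lsum_le_length. intros q Hq. destruct (HF q Hq) as [_ [H1 _]].
    assert (Hle : IZR (Z.of_nat (2 ^ j)) + 1 <= IZR q) by (rewrite <- plus_IZR; apply IZR_le; lia).
    rewrite <- INR_IZR_INZ in Hle. pose proof (pos_INR (2 ^ j)).
    apply Rinv_le_contravar; lra.
  - apply primes_in_dyadic_interval; auto. split.
    + now apply NoDup_filter.
    + intros x y Hx Hy. apply filter_In in Hx, Hy. apply Hpc; tauto.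
Qed.

Lemma recip_sum_dyadic_0_le Q : pairwise_coprime Q -> (forall q, In q Q -> prime q) ->
  recip_sum (filter (in_dyadic 0) Q) <= 1.
Proof.
  intros Hpc Hpr. destruct (recip_sum_dyadic_le Q 0 Hpc Hpr) as [H1 H2]. simpl in *.
  set (l := length _) in *.
  assert (Hl : (l <= 2)%nat).
  { destruct (le_lt_dec l 2) as [|Hl]; auto. exfalso.
    assert (2 ^ Z.of_nat 3 <= 2 ^ Z.of_nat l)%Z by (apply Z.pow_le_mono_r; lia). simpl in *. lia. }
  apply le_INR in Hl. simpl in Hl. lra.
Qed.

Lemma recip_sum_dyadic_le_inv Q j : pairwise_coprime Q -> (forall q, In q Q -> prime q) ->
  (1 <= j)%nat -> recip_sum (filter (in_dyadic j) Q) <= 2 / INR j.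
Proof.
  intros Hpc Hpr Hj. destruct (recip_sum_dyadic_le Q j Hpc Hpr) as [H1 H2].
  set (l := length _) in *.
  (* [(2^j + 1)^l <= 4^(2^j)] forces [j l <= 2^(j+1)]. *)
  assert (Hl : (j * l <= 2 ^ S j)%nat).
  { assert (Hp : (2 ^ Z.of_nat (j * l) <= 2 ^ Z.of_nat (2 ^ S j))%Z).
    { rewrite Nat2Z.inj_mul, Z.pow_mul_r by lia.
      apply Z.le_trans with ((Z.of_nat (2 ^ j) + 1) ^ Z.of_nat l)%Z.
      - rewrite Nat2Z.inj_pow. apply Z.pow_le_mono_l. split; [apply Z.pow_nonneg|]; simpl; lia.
      - eapply Z.le_trans; [exact H2|]. rewrite Nat.pow_succ_r', Nat2Z.inj_mul. apply Z.le_refl. }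
    apply Z.pow_le_mono_r_iff in Hp; lia. }
  eapply Rle_trans; [exact H1|].
  assert (Hjp : 0 < INR j) by (apply lt_0_INR; lia).
  assert (Hp : 0 < 2 ^ j) by (apply pow_lt; lra).
  apply le_INR in Hl. rewrite mult_INR, pow_INR in Hl. rewrite pow_INR.
  change (INR 2) with 2 in *. change (2 ^ S j) with (2 * 2 ^ j) in Hl.
  apply Rle_trans with (INR l / 2 ^ j).
  { unfold Rdiv. apply Rmult_le_compat_l; [apply pos_INR|apply Rinv_le_contravar; lra]. }
  apply Rmult_le_reg_r with (INR j * 2 ^ j); [nra|].
  replace (INR l / 2 ^ j * (INR j * 2 ^ j)) with (INR j * INR l) by (field; lra).
  replace (2 / INR j * (INR j * 2 ^ j)) with (2 * 2 ^ j) by (field; lra). lra.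
Qed.

Lemma ln_le x y : 0 < x -> x <= y -> ln x <= ln y.
Proof. intros Hx [H|H]; [left; now apply ln_increasing|subst; lra]. Qed.

Lemma ln_le_sub1 x : 0 < x -> ln x <= x - 1.
Proof. intros Hx. pose proof (exp_ineq1_le (ln x)). rewrite exp_ln in H by auto. lra. Qed.

Lemma ln3_ge1 : 1 <= ln 3.
Proof. rewrite <- (ln_exp 1). apply ln_le; [apply exp_pos|apply exp_le_3]. Qed.

Lemma harmonic_le m : (1 <= m)%nat -> sumN (fun i => / INR (S i)) m <= 1 + ln (INR m).
Proof.
  induction m as [|m IH]; intros Hm; [lia|].
  destruct m as [|m]; [simpl; rewrite ln_1; lra|].
  specialize (IH ltac:(lia)).
  change (sumN (fun i => / INR (S i)) (S (S m)))
    with (sumN (fun i => / INR (S i)) (S m) + / INR (S (S m))).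
  set (a := INR (S m)) in *. assert (Ha : 0 < a) by (unfold a; apply lt_0_INR; lia).
  rewrite (S_INR (S m)). fold a.
  assert (H : ln (a / (a + 1)) <= a / (a + 1) - 1) by (apply ln_le_sub1; apply Rdiv_lt_0_compat; lra).
  unfold Rdiv in H. rewrite ln_mult, ln_Rinv in H by (try apply Rinv_0_lt_compat; lra).
  replace (a * / (a + 1) - 1) with (- / (a + 1)) in H by (field; lra). lra.
Qed.

(* With [2^(J-1) < n <= 2^J]: the primes above [2^J] contribute at most
   [n / 2^J <= 1], the dyadic block [(2^j, 2^(j+1)]] at most [2/j] for [j >= 1]
   (at most 1 for [j = 0]), and [J <= 2 ln (n+1)]. *)
Lemma recip_sum_primes_le Q : pairwise_coprime Q -> (forall q, In q Q -> prime q) ->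
  (2 <= length Q)%nat -> recip_sum Q <= 6 + 2 * ln (ln (INR (length Q) + 1)).
Proof.
  intros Hpc Hpr Hn. set (n := length Q) in *.
  pose proof (Nat.log2_up_spec n ltac:(lia)) as [Hlo Hhi].
  destruct (Nat.log2_up n) as [|J] eqn:EJ; [simpl in Hhi; lia|]. simpl pred in Hlo.
  assert (Hq2 : forall q, In q Q -> (2 <= q)%Z) by (intros q Hq; destruct (Hpr q Hq); lia).
  rewrite (recip_sum_dyadic_decomp Q (S J) Hq2).
  assert (Hp : 0 < INR (2 ^ S J)) by (apply lt_0_INR, Nat.neq_0_lt_0, Nat.pow_nonzero; lia).
  assert (Htail : recip_sum (filter (above (S J)) Q) <= 1).
  { eapply Rle_trans; [apply recip_sum_above_le; intros q Hq _; specialize (Hq2 q Hq); lia|].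
    assert (Hlen : (length (filter (above (S J)) Q) <= n)%nat) by apply filter_length_le.
    apply le_INR in Hlen, Hhi.
    apply Rmult_le_reg_r with (INR (2 ^ S J) + 1); [lra|].
    unfold Rdiv. rewrite Rmult_assoc, Rinv_l by lra. lra. }
  change (sumN ?f (S J)) with (sumN f (1 + J)). rewrite sumN_add. simpl sumN at 1.
  pose proof (recip_sum_dyadic_0_le Q Hpc Hpr) as B0.
  assert (Bs : sumN (fun i => recip_sum (filter (in_dyadic (1 + i)) Q)) J
               <= 2 * sumN (fun i => / INR (S i)) J).
  { rewrite <- sumN_scal. apply sumN_le. intros i _.
    eapply Rle_trans; [apply recip_sum_dyadic_le_inv; auto; lia|]. right. reflexivity. }
  assert (Hn1 : 3 <= INR n + 1) by (apply le_INR in Hn; simpl in Hn; lra).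
  assert (Hl1 : 1 <= ln (INR n + 1)) by (eapply Rle_trans; [apply ln3_ge1|]; apply ln_le; lra).
  assert (Hl0 : 0 <= ln (ln (INR n + 1))) by (rewrite <- ln_1; apply ln_le; lra).
  destruct J as [|J]; [simpl sumN in *; lra|].
  pose proof (harmonic_le (S J) ltac:(lia)) as Hh.
  assert (HJ : INR (S J) * ln 2 < ln (INR n + 1)).
  { rewrite <- ln_pow by lra. apply Rlt_le_trans with (ln (INR n)).
    - apply ln_increasing; [apply pow_lt; lra|]. rewrite <- (pow_INR 2). now apply lt_INR.
    - apply ln_le; [apply lt_0_INR; lia|lra]. }
  pose proof ln_lt_2. pose proof (ln_le_sub1 2 ltac:(lra)).
  assert (HJ2 : INR (S J) <= 2 * ln (INR n + 1)).
  { assert (0 < INR (S J)) by (apply lt_0_INR; lia). nra. }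
  assert (Hlj : ln (INR (S J)) <= 1 + ln (ln (INR n + 1))).
  { eapply Rle_trans; [apply ln_le; [apply lt_0_INR; lia|exact HJ2]|].
    rewrite ln_mult by lra. lra. }
  lra.
Qed.

Lemma exp_le x y : x <= y -> exp x <= exp y.
Proof. intros [H|H]; [left; now apply exp_increasing|subst; lra]. Qed.

Lemma exp_pow x (n : nat) : exp x ^ n = exp (INR n * x).
Proof. rewrite <- Rpower_pow by apply exp_pos. unfold Rpower. now rewrite ln_exp. Qed.

Lemma pow_le_exp_mul_fact L : INR L ^ L <= exp (INR L) * INR (fact L).
Proof.
  induction L as [|L IH]; [simpl; rewrite exp_0; lra|].
  (* [(L+1)^L <= e L^L], from [(1 + 1/L)^L <= e]. *)
  assert (Hm : INR (S L) ^ L <= exp 1 * INR L ^ L).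
  { destruct L as [|L]; [simpl; pose proof (exp_ineq1_le 1); lra|].
    set (m := INR (S L)). assert (Hm : 0 < m) by (unfold m; apply lt_0_INR; lia).
    rewrite (S_INR (S L)). fold m. replace (m + 1) with (m * (1 + / m)) by (field; lra).
    rewrite Rpow_mult_distr, Rmult_comm. apply Rmult_le_compat_r; [apply pow_le; lra|].
    pose proof (exp_ineq1_le (/ m)).
    apply Rle_trans with (exp (/ m) ^ S L).
    - apply pow_incr. split; auto. assert (0 < / m) by (apply Rinv_0_lt_compat; lra). lra.
    - rewrite exp_pow. right. f_equal. unfold m. field. apply not_0_INR. lia. }
  change (INR (S L) ^ S L) with (INR (S L) * INR (S L) ^ L).
  rewrite S_INR at 3. rewrite exp_plus, fact_simpl, mult_INR.
  assert (0 < INR (S L)) by (apply lt_0_INR; lia). pose proof (exp_pos 1).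
  apply Rle_trans with (INR (S L) * (exp 1 * INR L ^ L)); [apply Rmult_le_compat_l; lra|].
  apply Rle_trans with (INR (S L) * (exp 1 * (exp (INR L) * INR (fact L)))); [|right; ring].
  apply Rmult_le_compat_l; [lra|]. apply Rmult_le_compat_l; lra.
Qed.

Lemma exp_le_one_minus x d q : 0 <= d -> d + 1 <= q -> 0 <= x <= d / q ->
  exp (- (d * (d + 1) / q)) <= 1 - x.
Proof.
  intros Hd Hq Hx.
  assert (Hq0 : 0 < q) by lra. assert (Hqd : 0 < q - d) by lra.
  apply Rle_trans with (exp (- (d / (q - d)))).
  { apply exp_le, Ropp_le_contravar. unfold Rdiv.
    apply Rmult_le_reg_r with (q * (q - d)); [nra|].
    replace (d * / (q - d) * (q * (q - d))) with (d * q) by (field; lra).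
    replace (d * (d + 1) * / q * (q * (q - d))) with (d * (d + 1) * (q - d)) by (field; lra).
    nra. }
  apply Rle_trans with ((q - d) / q); [|replace ((q - d) / q) with (1 - d / q) by (field; lra); lra].
  rewrite exp_Ropp. pose proof (exp_ineq1_le (d / (q - d))).
  replace ((q - d) / q) with (/ (1 + d / (q - d))) by (field; lra).
  assert (0 <= d / (q - d)) by (apply Rmult_le_pos; [lra|left; apply Rinv_0_lt_compat; lra]).
  apply Rinv_le_contravar; lra.
Qed.

Lemma ln2_le : ln 2 <= 4 / 5.
Proof.
  assert (H54 : 5 / 4 <= exp (1 / 4)) by (pose proof (exp_ineq1_le (1 / 4)); lra).
  assert (H : 2 ^ 5 <= exp 4).
  { replace 4 with (INR 16 * (1 / 4)) by (simpl; lra). rewrite <- exp_pow.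
    apply Rle_trans with ((5 / 4) ^ 16); [simpl; lra|]. apply pow_incr. lra. }
  assert (ln (2 ^ 5) <= 4) by (rewrite <- (ln_exp 4); apply ln_le; [simpl; lra|auto]).
  rewrite ln_pow in H0 by lra. simpl in H0. lra.
Qed.

Lemma ln6_ge : 3 / 2 <= ln 6.
Proof.
  assert (H : ln (3 ^ 3) <= ln (6 ^ 2)) by (apply ln_le; simpl; lra).
  rewrite !ln_pow in H by lra. pose proof ln3_ge1. simpl in H. lra.
Qed.

(* [ln (D + 3) >= 1 + D / (D + 3)], via [3^(2D+3) <= (D+3)^(D+3)] and [ln 3 >= 1]. *)
Lemma ln_add3_ge (D : nat) : (2 <= D)%nat -> 1 + INR D / (INR D + 3) <= ln (INR D + 3).
Proof.
  intros HD.
  assert (HZ : (3 ^ (2 * Z.of_nat D + 3) <= (Z.of_nat D + 3) ^ (Z.of_nat D + 3))%Z).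
  { destruct (le_lt_dec D 5) as [H5|H5].
    - destruct D as [|[|[|[|[|[|D]]]]]]; try lia; vm_compute; congruence.
    - apply Z.le_trans with (9 ^ (Z.of_nat D + 3))%Z.
      + replace 9%Z with (3 ^ 2)%Z by reflexivity. rewrite <- Z.pow_mul_r by lia.
        apply Z.pow_le_mono_r; lia.
      + apply Z.pow_le_mono_l; lia. }
  replace (2 * Z.of_nat D + 3)%Z with (Z.of_nat (2 * D + 3)) in HZ by lia.
  replace (Z.of_nat D + 3)%Z with (Z.of_nat (D + 3)) in HZ by lia.
  apply IZR_le in HZ. rewrite <- !pow_IZR, <- INR_IZR_INZ, plus_INR in HZ.
  replace (INR 3) with 3 in HZ by (simpl; lra).
  assert (HD' : 2 <= INR D) by (apply le_INR in HD; simpl in HD; lra).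
  assert (Hl : ln (3 ^ (2 * D + 3)) <= ln ((INR D + 3) ^ (D + 3))) by (apply ln_le; [apply pow_lt; lra|auto]).
  rewrite !ln_pow, !plus_INR, mult_INR in Hl by lra. simpl in Hl.
  pose proof ln3_ge1.
  apply Rmult_le_reg_l with (INR D + 3); [lra|].
  replace ((INR D + 3) * (1 + INR D / (INR D + 3))) with (2 * INR D + 3) by (field; lra).
  replace (1 + 1 + 1) with 3 in Hl by ring. replace (1 + 1) with 2 in Hl by ring. nra.
Qed.

Lemma pow_div_fact_le_half_exp (A D : R) (L : nat) : 0 <= A -> 2 <= D ->
  1 + D / (D + 3) <= ln (D + 3) -> (D + 3) * A + 2 <= INR L ->
  A ^ L / INR (fact L) <= exp (- (D * A)) / 2.
Proof.
  intros HA HD Hln HL. set (beta := D + 3) in *.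
  assert (HbA : 0 <= beta * A) by (apply Rmult_le_pos; unfold beta; lra).
  assert (HLp : 0 < INR L) by lra.
  assert (Hf : 0 < INR (fact L)) by (apply lt_0_INR, lt_O_fact).
  pose proof (pow_le_exp_mul_fact L) as HF.
  assert (HLL : 0 < INR L ^ L) by (apply pow_lt; lra).
  apply Rle_trans with ((exp 1 * A / INR L) ^ L).
  { unfold Rdiv. rewrite !Rpow_mult_distr, pow_inv, exp_pow, Rmult_1_r.
    apply Rmult_le_reg_r with (INR (fact L) * INR L ^ L); [nra|].
    replace (A ^ L * / INR (fact L) * (INR (fact L) * INR L ^ L)) with (A ^ L * INR L ^ L)
      by (field; lra).
    replace (exp (INR L) * A ^ L * / INR L ^ L * (INR (fact L) * INR L ^ L))
      with (A ^ L * (exp (INR L) * INR (fact L))) by (field; lra).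
    apply Rmult_le_compat_l; [apply pow_le|]; auto. }
  apply Rle_trans with ((exp 1 / beta) ^ L).
  { apply pow_incr. split.
    - apply Rmult_le_pos; [apply Rmult_le_pos; [left; apply exp_pos|auto]|left; apply Rinv_0_lt_compat; lra].
    - unfold Rdiv. rewrite Rmult_assoc. apply Rmult_le_compat_l; [left; apply exp_pos|].
      apply Rmult_le_reg_r with (INR L * beta); [unfold beta in *; nra|].
      replace (A * / INR L * (INR L * beta)) with (beta * A) by (field; lra).
      replace (/ beta * (INR L * beta)) with (INR L) by (unfold beta in *; field; lra). lra. }
  replace (exp 1 / beta) with (exp (1 - ln beta))
    by (unfold Rminus; rewrite exp_plus, exp_Ropp, exp_ln by (unfold beta; lra); auto).
  replace (exp (- (D * A)) / 2) with (exp (- (D * A) - ln 2))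
    by (unfold Rminus; rewrite exp_plus, (exp_Ropp (ln 2)), exp_ln by lra; auto).
  rewrite exp_pow. apply exp_le.
  pose proof ln2_le.
  assert (Hx : D / beta >= 2 / 5).
  { apply Rle_ge. unfold beta. apply Rmult_le_reg_r with (D + 3); [lra|].
    replace (D / (D + 3) * (D + 3)) with D by (field; lra). lra. }
  assert (Hy : beta * A * (D / beta) = D * A) by (unfold beta; field; lra).
  assert (INR L * (ln beta - 1) >= (beta * A + 2) * (D / beta))
    by (apply Rle_ge, Rmult_le_compat; lra).
  nra.
Qed.
Lemma exponent_bound_one_prime (D H Lm Lam X l3 : R) : 2 <= D -> 0 <= H <= 1 / D ->
  0 <= l3 <= 2 -> 0 <= Lm <= (D + 3) * (D - 1) * H + 4 -> 1 / 2 <= Lam -> 2 <= X ->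
  l3 + (D - 1) * D * H + Lm * Lam <= 4 * D ^ 2 * X * Lam.
Proof.
  intros HD [HH0 HH] Hl3 [HL0 HL] HLam HX.
  assert (HDH : D * H <= 1).
  { apply Rmult_le_reg_l with (/ D); [apply Rinv_0_lt_compat; lra|].
    rewrite <- Rmult_assoc, Rinv_l, Rmult_1_l by lra. unfold Rdiv in HH. lra. }
  assert (HK : (D - 1) * D * H <= D - 1) by (rewrite Rmult_assoc; nra).
  assert (HL' : Lm <= D + 7) by nra.
  assert (Lm * Lam <= (D + 7) * Lam) by nra.
  assert (4 * D ^ 2 * X * Lam >= 8 * D ^ 2 * Lam).
  { assert (0 <= D ^ 2 * Lam) by (apply Rmult_le_pos; [apply pow_le|]; lra).
    replace (4 * D ^ 2 * X * Lam) with (4 * X * (D ^ 2 * Lam)) by ring. nra. }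
  assert ((8 * D * D - D - 7) * (1 / 2) <= (8 * D * D - D - 7) * Lam)
    by (apply Rmult_le_compat_l; nra).
  assert (8 * D ^ 2 * Lam - (D + 7) * Lam >= D + 1) by (simpl; nra).
  lra.
Qed.

Lemma exponent_bound_many_primes (D H Lm Lam X l3 : R) : (D = 2 \/ 3 <= D) -> 0 <= H <= 2 * X ->
  0 <= l3 <= 2 -> 0 <= Lm <= (D + 3) * (D - 1) * H + 4 -> 3 <= X -> 1 <= Lam ->
  (3 <= D -> 3 / 2 <= Lam) ->
  l3 + (D - 1) * D * H + Lm * Lam <= 4 * D ^ 2 * X * Lam.
Proof.
  intros HD [HH0 HH] Hl3 [HL0 HL] HX HLam HLam3.
  assert (HLL : Lm * Lam <= ((D + 3) * (D - 1) * (2 * X) + 4) * Lam).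
  { apply Rmult_le_compat_r; [lra|].
    assert ((D + 3) * (D - 1) * H <= (D + 3) * (D - 1) * (2 * X)) by (apply Rmult_le_compat_l; nra).
    lra. }
  assert (HK : (D - 1) * D * H <= (D - 1) * D * (2 * X)) by (apply Rmult_le_compat_l; nra).
  destruct HD as [->|HD3].
  - assert (6 * X * Lam >= 4 * X + 4 * Lam + 2) by nra. simpl. lra.
  - specialize (HLam3 HD3).
    assert (2 * (D - 1) * D * X <= (4 / 3) * (D * D - D) * X * Lam).
    { assert (0 <= (D * D - D) * X) by (apply Rmult_le_pos; nra).
      assert ((4 / 3) * ((D * D - D) * X) * (3 / 2) <= (4 / 3) * ((D * D - D) * X) * Lam)
        by (apply Rmult_le_compat_l; lra).
      nra. }
    set (c := 4 * D * D - 2 * (D + 3) * (D - 1) - (4 / 3) * (D * D - D)).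
    assert (Hc : c >= 10 / 3) by (unfold c; nra).
    assert (10 / 3 * 3 * Lam <= c * X * Lam) by (apply Rmult_le_compat_r; nra).
    assert (4 * D ^ 2 * X * Lam
            = c * X * Lam + 2 * (D + 3) * (D - 1) * X * Lam + (4 / 3) * (D * D - D) * X * Lam)
      by (unfold c; simpl; ring).
    nra.
Qed.

(** * The sieve window *)

Definition sieve_level (d : nat) (H : R) : nat :=
  2 * Z.to_nat (up (((INR d + 4) * (INR d * H) + 2) / 2)).

Definition sieve_window (d n : nat) (H : R) : R :=
  2 * exp ((INR d + 1) * (INR d * H)) * ((INR d + 1) * INR n) ^ sieve_level d H.

Lemma sieve_window_nonneg d n H : 0 <= sieve_window d n H.
Proof.
  unfold sieve_window. pose proof (exp_pos ((INR d + 1) * (INR d * H))).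
  pose proof (pos_INR d). pose proof (pos_INR n).
  apply Rmult_le_pos; [lra|apply pow_le; nra].
Qed.

Lemma nat_between (W : R) : 0 <= W -> exists N : nat, W < INR N <= W + 1.
Proof.
  intros HW. destruct (archimed W) as [H1 H2]. exists (Z.to_nat (up W)).
  rewrite INR_IZR_INZ, Z2Nat.id by (apply le_IZR; lra). lra.
Qed.

Lemma sieve_level_spec d H : 0 <= H ->
  Nat.even (sieve_level d H) = true /\
  (INR d + 4) * (INR d * H) + 2 <= INR (sieve_level d H) <= (INR d + 4) * (INR d * H) + 4.
Proof.
  intros HH. set (y := (INR d + 4) * (INR d * H) + 2).
  assert (Hy : 0 <= y) by (pose proof (pos_INR d); unfold y; nra).
  destruct (archimed (y / 2)) as [Hup1 Hup2].
  assert (Hupp : (0 <= up (y / 2))%Z) by (apply le_IZR; lra).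
  unfold sieve_level. fold y. split; [apply Nat.even_mul|].
  rewrite mult_INR, (INR_IZR_INZ (Z.to_nat _)), Z2Nat.id by auto.
  change (INR 2) with 2. unfold y in *. lra.
Qed.

Lemma recip_sum_nonneg Q : (forall q, In q Q -> (0 < q)%Z) -> 0 <= recip_sum Q.
Proof.
  intros HQ. apply lsum_nonneg. intros q Hq. left.
  apply Rinv_0_lt_compat, IZR_lt, HQ, Hq.
Qed.

(* [prod_compl Q a >= exp (-K)] because [1 - x >= exp (- d (d+1) / q)] for
   [x <= d / q], while the Bonferroni error [e_L <= (d H)^L / L!] is at most
   [exp (-K) / 2] at this level. *)
Lemma incl_excl_sieve_level_ge (a : Z -> R) Q (d : nat) : (1 <= d)%nat ->
  (forall q, In q Q -> 0 <= a q <= INR d / IZR q /\ (Z.of_nat d < q)%Z) ->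
  exp (- ((INR d + 1) * (INR d * recip_sum Q))) / 2 <= incl_excl Q a (sieve_level d (recip_sum Q)).
Proof.
  intros Hd HQ. set (H := recip_sum Q). set (K := (INR d + 1) * (INR d * H)).
  assert (HdR : 1 <= INR d) by (apply le_INR in Hd; simpl in Hd; lra).
  assert (Hq : forall q, In q Q -> INR d + 1 <= IZR q).
  { intros q Hq. rewrite INR_IZR_INZ, <- plus_IZR. apply IZR_le. destruct (HQ q Hq). lia. }
  assert (Ha1 : forall q, In q Q -> 0 <= a q <= 1).
  { intros q Hq'. destruct (HQ q Hq') as [[Ha0 Ha] _]. specialize (Hq q Hq'). split; auto.
    eapply Rle_trans; [exact Ha|]. apply Rmult_le_reg_r with (IZR q); [lra|].
    unfold Rdiv. rewrite Rmult_assoc, Rinv_l by lra. lra. }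
  assert (HH : 0 <= H) by (apply recip_sum_nonneg; intros q Hq'; destruct (HQ q Hq'); lia).
  destruct (sieve_level_spec d H HH) as [Heven HL].
  set (L := sieve_level d H) in *.
  assert (Hprod : exp (- K) <= prod_compl Q a).
  { replace K with (lsum Q (fun q => INR d * (INR d + 1) / IZR q)).
    - apply prod_compl_ge_exp. intros q Hq'. destruct (HQ q Hq') as [[Ha0 Ha] _].
      split; [|apply Ha1; auto]. apply exp_le_one_minus; auto; lra.
    - unfold K, H, recip_sum. rewrite <- !lsum_scal. apply lsum_ext_in. intros. unfold Rdiv. ring. }
  assert (Hesym : esym Q a L <= exp (- K) / 2).
  { eapply Rle_trans; [apply esym_le; intros q Hq'; apply Ha1; auto|].
    apply Rle_trans with ((INR d * H) ^ L / INR (fact L)).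
    - unfold Rdiv. apply Rmult_le_compat_r; [left; apply Rinv_0_lt_compat, lt_0_INR, lt_O_fact|].
      apply pow_incr. split; [apply lsum_nonneg; intros q Hq'; apply Ha1; auto|].
      unfold H, recip_sum. rewrite <- lsum_scal. apply lsum_le.
      intros q Hq'. destruct (HQ q Hq') as [[_ Ha] _]. unfold Rdiv in Ha. lra.
    - apply pow_div_fact_le_half_exp; [apply Rmult_le_pos; lra|lra| |lra].
      pose proof (ln_add3_ge (S d) ltac:(lia)) as Hln. rewrite S_INR in Hln. exact Hln. }
  pose proof (incl_excl_bounds Q a Ha1 L) as HB. rewrite Heven in HB. lra.
Qed.

Lemma window_sum_ind_pos (p : Z -> bool) t0 N : 0 < window_sum (fun t => ind (p t)) t0 N ->
  exists j, (j < N)%nat /\ p (t0 + Z.of_nat j)%Z = true.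
Proof.
  induction N as [|N IH]; intros H; [unfold window_sum in H; simpl in H; lra|].
  rewrite window_sum_S in H. destruct (p (t0 + Z.of_nat N)%Z) eqn:E.
  - exists N. split; auto.
  - simpl in H. destruct IH as [j [Hj Hp]]; [lra|]. exists j. split; auto.
Qed.

Section SieveExists.

Variable bad : Z -> Z -> bool.
Variables (Q : list Z) (d : nat).
Hypothesis d_pos : (1 <= d)%nat.
Hypothesis Q_nonempty : Q <> nil.
Hypothesis Q_coprime : pairwise_coprime Q.
Hypothesis Q_gt_d : forall q, In q Q -> (Z.of_nat d < q)%Z.
Hypothesis bad_periodic : forall q, In q Q -> periodic (fun t => ind (bad q t)) q.
Hypothesis bad_count_le : forall q, In q Q -> bad_count bad q <= INR d.

(* Weighting every [t] by 1, the sieve error is at most [((d+1) n)^L], while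
   the main term is at least [N exp (-K) / 2]; [sieve_window] makes the latter win. *)
Lemma sieve_exists N : sieve_window d (length Q) (recip_sum Q) < INR N ->
  exists j, (j < N)%nat /\ forallb (fun q => negb (bad q (Z.of_nat j))) Q = true.
Proof.
  intros HN. set (n := length Q) in *. set (H := recip_sum Q) in *.
  assert (Hq0 : forall q, In q Q -> (0 < q)%Z) by (intros q Hq; specialize (Q_gt_d q Hq); lia).
  destruct (sieve_level_spec d H ltac:(apply recip_sum_nonneg; auto)) as [Heven _].
  set (K := (INR d + 1) * (INR d * H)) in *. set (L := sieve_level d H) in *.
  assert (Hn : 1 <= INR n).
  { destruct Q as [|q Q']; [congruence|]. unfold n. simpl length. rewrite S_INR.
    pose proof (pos_INR (length Q')). lra. }
  pose proof (sieve_error_unweighted bad Q ltac:(intros; split; auto) Q_coprime L 0 N) as Herr.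
  pose proof (window_sum_incl_excl_le_sifted bad Q L 0 N Heven) as Hsifted.
  assert (Hmain : exp (- K) / 2 <= incl_excl Q (bad_density bad) L).
  { apply incl_excl_sieve_level_ge; auto. intros q Hq. split; [|auto].
    assert (0 < IZR q) by (apply IZR_lt; auto).
    unfold bad_density, Rdiv. split.
    - apply Rmult_le_pos; [apply window_sum_nonneg; intros; apply ind_01|].
      left; apply Rinv_0_lt_compat; lra.
    - apply Rmult_le_compat_r; [left; apply Rinv_0_lt_compat; lra|auto]. }
  assert (Hgrowth : (1 + lsum Q (bad_count bad)) ^ L <= ((INR d + 1) * INR n) ^ L).
  { apply pow_incr. split.
    - pose proof (lsum_nonneg Q (bad_count bad)
        ltac:(intros; apply window_sum_nonneg; intros; apply ind_01)). lra.
    - pose proof (lsum_le_length Q _ _ bad_count_le). fold n in H0.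
      assert (HdR : 0 <= INR d) by apply pos_INR. nra. }
  assert (Hwin : ((INR d + 1) * INR n) ^ L < INR N * (exp (- K) / 2)).
  { unfold sieve_window in HN. fold H K L n in HN.
    assert (HeK : exp (- K) * exp K = 1) by (rewrite <- exp_plus, Rplus_opp_l; apply exp_0).
    pose proof (Rmult_lt_compat_r (exp (- K) / 2) _ _ ltac:(pose proof (exp_pos (- K)); lra) HN) as Hm.
    replace (2 * exp K * ((INR d + 1) * INR n) ^ L * (exp (- K) / 2))
      with (((INR d + 1) * INR n) ^ L * (exp (- K) * exp K)) in Hm by field.
    now rewrite HeK, Rmult_1_r in Hm. }
  assert (Hpos : 0 < window_sum (fun t => ind (forallb (fun q => negb (bad q t)) Q)) 0 N).
  { pose proof (pos_INR N). unfold Rabs in Herr. destruct Rcase_abs in Herr; nra. }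
  destruct (window_sum_ind_pos _ 0 N Hpos) as [j [Hj Hj']]. exists j. auto.
Qed.

End SieveExists.

Lemma sieve_window_succ_le_exp (d n : nat) H : 0 <= H -> (1 <= n)%nat ->
  sieve_window d n H + 1
  <= exp (ln 3 + (INR d + 1) * (INR d * H) + INR (sieve_level d H) * ln ((INR d + 1) * INR n)).
Proof.
  intros HH Hn. unfold sieve_window. set (L := sieve_level d H).
  pose proof (pos_INR d). assert (1 <= INR n) by (apply le_INR in Hn; simpl in Hn; lra).
  assert (1 <= exp ((INR d + 1) * (INR d * H))).
  { rewrite <- exp_0 at 1. apply exp_le. apply Rmult_le_pos; [|apply Rmult_le_pos]; lra. }
  assert (1 <= ((INR d + 1) * INR n) ^ L) by (apply pow_R1_Rle; nra).
  rewrite !exp_plus, exp_ln, <- exp_pow, exp_ln by nra. nra.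
Qed.

Lemma sieve_window_le_E_bound (d : nat) Q : (1 <= d)%nat -> Q <> nil ->
  pairwise_coprime Q -> (forall q, In q Q -> prime q) -> (forall q, In q Q -> (Z.of_nat d < q)%Z) ->
  sieve_window d (length Q) (recip_sum Q) + 1 <= E_bound (length Q) d.
Proof.
  intros Hd HQ Hpc Hpr Hgt.
  set (n := length Q). set (H := recip_sum Q). set (D := INR d + 1).
  set (Lam := ln (D * INR n)). set (X := 3 + ln (ln (INR n + 1))).
  assert (HdR : 1 <= INR d) by (apply le_INR in Hd; simpl in Hd; lra).
  assert (Hn1 : (1 <= n)%nat) by (unfold n; destruct Q; [congruence|simpl; lia]).
  assert (HH : 0 <= H) by (apply recip_sum_nonneg; intros q Hq; specialize (Hgt q Hq); lia).
  assert (HE : E_bound n d = exp (4 * D ^ 2 * X * Lam)).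
  { unfold E_bound, Rpower. rewrite mult_INR, plus_INR. simpl (INR 1). fold D X Lam. f_equal. }
  rewrite HE. eapply Rle_trans; [apply sieve_window_succ_le_exp; auto|]. apply exp_le. fold D Lam.
  replace (D * (INR d * H)) with ((D - 1) * D * H) by (unfold D; ring).
  assert (Hl3 : 0 <= ln 3 <= 2) by (pose proof ln3_ge1; pose proof (ln_le_sub1 3); lra).
  destruct (sieve_level_spec d H HH) as [_ [_ HL]].
  assert (HLm : 0 <= INR (sieve_level d H) <= (D + 3) * (D - 1) * H + 4).
  { split; [apply pos_INR|]. unfold D. replace (INR d + 1 - 1) with (INR d) by ring. lra. }
  destruct (Nat.eq_dec n 1) as [En|En].
  - unfold H, n in *. destruct Q as [|q [|q' Q']]; simpl in En; try lia.
    assert (Hq : D <= IZR q).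
    { unfold D. rewrite INR_IZR_INZ, <- plus_IZR. apply IZR_le.
      specialize (Hgt q (or_introl eq_refl)). lia. }
    apply exponent_bound_one_prime; auto; [unfold D; lra| | |].
    + split; auto. unfold recip_sum; simpl. rewrite Rplus_0_r.
      unfold Rdiv. rewrite Rmult_1_l. apply Rinv_le_contravar; unfold D in *; lra.
    + unfold Lam. simpl (INR _). rewrite Rmult_1_r. pose proof ln_lt_2.
      assert (ln 2 <= ln D) by (apply ln_le; unfold D; lra). lra.
    + unfold X. simpl (INR _). pose proof ln_lt_2. pose proof ln2_le.
      assert (ln (/ 2) <= ln (ln (1 + 1))) by (apply ln_le; [lra|]; replace (1 + 1) with 2 by ring; lra).
      rewrite ln_Rinv in H2 by lra. lra.
  - assert (Hn2 : 2 <= INR n) by (assert (2 <= n)%nat by lia; apply le_INR in H0; simpl in H0; lra).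
    assert (Hlnln : 0 <= ln (ln (INR n + 1))).
    { rewrite <- ln_1. apply ln_le; [lra|]. eapply Rle_trans; [apply ln3_ge1|]. apply ln_le; lra. }
    apply exponent_bound_many_primes; auto; unfold X in *; try lra.
    + destruct d as [|[|d']]; [lia|left; unfold D; simpl; lra|].
      right. unfold D. rewrite !S_INR. pose proof (pos_INR d'). lra.
    + split; auto. eapply Rle_trans; [apply recip_sum_primes_le; auto; lia|]. fold n. lra.
    + unfold Lam. eapply Rle_trans; [apply ln3_ge1|]. apply ln_le; [lra|unfold D in *; nra].
    + intros HD3. unfold Lam. eapply Rle_trans; [apply ln6_ge|]. apply ln_le; [lra|nra].
Qed.

(** * The system of congruences *)

Lemma crt_exists (M : list Z) (b : Z -> Z) : pairwise_coprime M ->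
  exists x0, forall m, In m M -> (m | x0 - b m)%Z.
Proof.
  induction M as [|m M IH]; intros Hpc; [exists 0%Z; intros m []|].
  destruct Hpc as [Hnd Hcop]. inversion Hnd; subst.
  destruct IH as [x1 Hx1]; [split; auto; intros; apply Hcop; simpl; auto|].
  assert (Hg : Zis_gcd m (prodZ M) 1).
  { rewrite <- (gcd_prodZ_1 m M).
    - rewrite Z.gcd_comm. apply Zgcd_is_gcd.
    - intros m' Hm'. apply Hcop; simpl; auto. intros ->. auto. }
  destruct (Zis_gcd_bezout _ _ _ Hg) as [u v Huv].
  (* [v * prodZ M] is 1 mod [m] and 0 mod every other modulus. *)
  exists (x1 + v * prodZ M * (b m - x1))%Z. intros m' [<-|Hm'].
  - exists ((x1 - b m) * u)%Z. replace (v * prodZ M)%Z with (1 - u * m)%Z by lia. ring.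
  - replace (x1 + v * prodZ M * (b m - x1) - b m')%Z with ((x1 - b m') + v * prodZ M * (b m - x1))%Z by ring.
    apply Z.divide_add_r; [auto|]. apply Z.divide_mul_l, Z.divide_mul_r, prodZ_divide; auto.
Qed.

Lemma crt_in_window (M : list Z) (b : Z -> Z) (k : Z) : pairwise_coprime M ->
  (forall m, In m M -> (0 < m)%Z) ->
  exists x1, (k <= x1 < k + prodZ M)%Z /\ forall m, In m M -> (m | x1 - b m)%Z.
Proof.
  intros Hpc Hpos. destruct (crt_exists M b Hpc) as [x0 Hx0].
  pose proof (prodZ_pos M Hpos) as HP.
  exists (k + (x0 - k) mod prodZ M)%Z. split; [pose proof (Z.mod_pos_bound (x0 - k) _ HP); lia|].
  intros m Hm. rewrite Zmod_eq by lia.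
  replace (k + (x0 - k - (x0 - k) / prodZ M * prodZ M) - b m)%Z
    with (x0 - b m + - ((x0 - k) / prodZ M) * prodZ M)%Z by ring.
  apply Z.divide_add_r; auto. apply Z.divide_mul_r, prodZ_divide; auto.
Qed.

Definition excluded (x1 P : Z) (c : Z -> nat -> Z) (d : nat) (q t : Z) : bool :=
  existsb (fun i => ((x1 + P * t - c q i) mod q =? 0)%Z) (seq 1 d).

Lemma excluded_periodic x1 P c d q : periodic (fun t => ind (excluded x1 P c d q t)) q.
Proof.
  intros t. unfold excluded. f_equal. induction (seq 1 d) as [|i l IH]; simpl; [reflexivity|].
  rewrite IH. replace (x1 + P * (t + q) - c q i)%Z with (x1 + P * t - c q i + P * q)%Z by ring.
  now rewrite Z_mod_plus_full.
Qed.

Lemma window_sum_ind_existsb_le (f : nat -> Z -> bool) l t0 N c :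
  (forall i, In i l -> window_sum (fun t => ind (f i t)) t0 N <= c) ->
  window_sum (fun t => ind (existsb (fun i => f i t) l)) t0 N <= INR (length l) * c.
Proof.
  induction l as [|i l IH]; intros H; simpl existsb.
  - rewrite Rmult_0_l. unfold window_sum. rewrite <- (Rmult_0_r (INR N)), <- sumN_const.
    apply sumN_le. intros. simpl; lra.
  - change (length (i :: l)) with (S (length l)). rewrite S_INR.
    apply Rle_trans with (window_sum (fun t => ind (f i t)) t0 N
                          + window_sum (fun t => ind (existsb (fun i => f i t) l)) t0 N).
    + unfold window_sum. rewrite <- sumN_plus. apply sumN_le. intros.
      unfold ind. destruct (f i _), (existsb _ _); simpl; lra.
    + pose proof (H i (or_introl eq_refl)). pose proof (IH ltac:(intros; apply H; simpl; auto)). lra.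
Qed.

Lemma window_sum_ind_le_1 (p : Z -> bool) t0 N :
  (forall j1 j2, (j1 < N)%nat -> (j2 < N)%nat ->
     p (t0 + Z.of_nat j1)%Z = true -> p (t0 + Z.of_nat j2)%Z = true -> j1 = j2) ->
  window_sum (fun t => ind (p t)) t0 N <= 1.
Proof.
  induction N as [|N IH]; intros H; [unfold window_sum; simpl; lra|].
  rewrite window_sum_S. destruct (p (t0 + Z.of_nat N)%Z) eqn:E; simpl ind.
  - replace (window_sum (fun t => ind (p t)) t0 N) with 0; [lra|].
    unfold window_sum. rewrite <- (Rmult_0_r (INR N)), <- sumN_const. apply sumN_ext.
    intros j Hj. destruct (p (t0 + Z.of_nat j)%Z) eqn:E2; [|reflexivity].
    specialize (H j N ltac:(lia) ltac:(lia) E2 E). lia.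
  - rewrite Rplus_0_r. apply IH. intros; apply H; auto; lia.
Qed.

(* Each excluded class [c q i] meets [x1 + P t], [0 <= t < q], at most once since [P] is
   invertible mod [q]. *)
Lemma excluded_count_le x1 P c d q : (0 < q)%Z -> Z.gcd P q = 1%Z ->
  bad_count (excluded x1 P c d) q <= INR d.
Proof.
  intros Hq HPq. unfold bad_count, excluded.
  replace (INR d) with (INR (length (seq 1 d)) * 1) by (rewrite length_seq; ring).
  apply (window_sum_ind_existsb_le (fun i t => ((x1 + P * t - c q i) mod q =? 0)%Z)).
  intros i _. apply window_sum_ind_le_1.
  intros j1 j2 Hj1 Hj2 E1 E2. apply Z.eqb_eq, Zmod_divide in E1, E2; try lia.
  assert (Hd12 : (q | P * (Z.of_nat j1 - Z.of_nat j2))%Z).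
  { replace (P * (Z.of_nat j1 - Z.of_nat j2))%Z
      with ((x1 + P * (0 + Z.of_nat j1) - c q i) - (x1 + P * (0 + Z.of_nat j2) - c q i))%Z by ring.
    now apply Z.divide_sub_r. }
  apply Gauss in Hd12; [|apply Zgcd_1_rel_prime; now rewrite Z.gcd_comm].
  destruct Hd12 as [z Hz]. assert (z = 0)%Z by nia. subst z. lia.
Qed.

Theorem theorem2 (d : nat) (M Q : list Z) (b : Z -> Z) (c : Z -> nat -> Z) :
  (0 < d)%nat ->
  NoDup M -> NoDup Q -> Q <> nil ->
  (forall m, In m M -> (0 < m)%Z) ->
  (forall q, In q Q -> prime q) ->
  (forall x y, In x (M ++ Q) -> In y (M ++ Q) -> x <> y -> Z.gcd x y = 1%Z) ->
  (forall m, In m M -> ~ In m Q) ->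
  (forall q, In q Q -> (Z.of_nat d < q)%Z) ->
  forall k : Z, exists x : Z,
    (k <= x)%Z /\
    (IZR x <= IZR k + IZR (prodZ M) * E_bound (length Q) d)%R /\
    (forall m, In m M -> (m | x - b m)%Z) /\
    (forall q i, In q Q -> (1 <= i <= d)%nat -> ~ (q | x - c q i)%Z).
Proof.
  intros Hd HndM HndQ HQne HMpos HQpr Hcop HMQ HQd k.
  assert (HcopM : pairwise_coprime M) by (split; auto; intros; apply Hcop; auto using in_or_app).
  assert (HcopQ : pairwise_coprime Q) by (split; auto; intros; apply Hcop; auto using in_or_app).
  assert (HPq : forall q, In q Q -> Z.gcd (prodZ M) q = 1%Z).
  { intros q Hq. apply gcd_prodZ_1. intros m Hm.
    apply Hcop; auto using in_or_app. intros ->. exact (HMQ q Hm Hq). }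
  destruct (crt_in_window M b k HcopM HMpos) as [x1 [Hx1 Hcong]].
  pose proof (prodZ_pos M HMpos) as HP. set (P := prodZ M) in *.
  pose proof (sieve_window_le_E_bound d Q Hd HQne HcopQ HQpr HQd) as HE.
  destruct (nat_between (sieve_window d (length Q) (recip_sum Q)) (sieve_window_nonneg _ _ _))
    as [N [HN1 HN2]].
  destruct (sieve_exists (excluded x1 P c d) Q d Hd HQne HcopQ HQd
              (fun q _ => excluded_periodic x1 P c d q)
              (fun q Hq => excluded_count_le x1 P c d q ltac:(specialize (HQd q Hq); lia) (HPq q Hq))
              N HN1) as [j [Hj Hgood]].
  exists (x1 + P * Z.of_nat j)%Z. split; [|split; [|split]].
  - nia.
  - assert (Hx : (x1 + P * Z.of_nat j <= k + P * Z.of_nat N)%Z) by nia.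
    apply IZR_le in Hx. rewrite (plus_IZR k), mult_IZR, <- (INR_IZR_INZ N) in Hx.
    assert (0 < IZR P) by (apply IZR_lt; lia).
    eapply Rle_trans; [exact Hx|]. apply Rplus_le_compat_l, Rmult_le_compat_l; lra.
  - intros m Hm.
    replace (x1 + P * Z.of_nat j - b m)%Z with (x1 - b m + Z.of_nat j * P)%Z by ring.
    apply Z.divide_add_r; [auto|]. apply Z.divide_mul_r, prodZ_divide, Hm.
  - intros q i Hq Hi Hdiv. rewrite forallb_forall in Hgood.
    specialize (Hgood q Hq). apply negb_true_iff in Hgood. revert Hgood. apply not_false_iff_true.
    apply existsb_exists. exists i. split; [apply in_seq; lia|]. apply Z.eqb_eq, Zdivide_mod, Hdiv.
Qed.
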